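(* Let $\mathcal{G}=\langle A_\alpha,B_\alpha:\alpha<\omega_1\rangle$ be a tight gap and let $X_\mathcal{G}$ be the space on $\omega\cup\{\infty\}$ in which points of $\omega$ are isolated and the neighborhood filter of $\infty$ is generated by the sets $B_\alpha\cup\{\infty\}$, $\alpha<\omega_1$. Then (1) an infinite set $E\subseteq\omega$ converges to $\infty$ if and only if there is $\alpha<\omega_1$ with $E\subseteq^*A_\alpha$; and (2) $X_\mathcal{G}$ is a Fréchet $\alpha_1$-space.
   Context: A tight gap is a sequence $\langle A_\alpha,B_\alpha:\alpha<\omega_1\rangle$ of infinite subsets of $\omega$ such that for all $\alpha<\beta$, $A_\alpha\subseteq^*A_\beta$, $B_\beta\subseteq^*B_\alpha$ and $A_\beta\subseteq^*B_\alpha$; if $E\subseteq^*B_\alpha$ for all $\alpha$ then $E\subseteq^*A_\beta$ for some $\beta$; and if $E\supseteq^*A_\alpha$ for all $\alpha$ then $E\supseteq^*B_\beta$ for some $\beta$. Here $\subseteq^*$ means inclusion up to a finite set. An infinite $E\subseteq\omega$ converges to $\infty$ if every neighborhood of $\infty$ contains all but finitely many elements of $E$. A space is Fréchet if whenever $x\in\overline{A}$ some sequence in $A$ converges to $x$. A space is $\alpha_1$ if for every point $x$ and every countable family of sequences converging to $x$, there is a single sequence converging to $x$ which contains all but finitely many elements of each member of the family. *)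

From Stdlib Require Import List Arith.
Import ListNotations.

Definition nset := nat -> Prop.

(* A \subseteq^* B : A \ B is finite (equivalently, bounded) *)
Definition subset_star (A B : nset) : Prop :=
  exists N, forall n, N <= n -> A n -> B n.

Definition infinite_nset (A : nset) : Prop :=
  forall N, exists n, N <= n /\ A n.

(* ---------- omega_1, up to order isomorphism ----------
   (I, lt) is a strict well-order, uncountable, all of whose proper initial
   segments are countable. *)
Definition countable_type (T : Type) : Prop :=
  exists f : T -> nat, forall x y, f x = f y -> x = y.

Record omega1_order (I : Type) (lt : I -> I -> Prop) : Prop := {
  o1_irrefl : forall a, ~ lt a a;
  o1_trans  : forall a b c, lt a b -> lt b c -> lt a c;
  o1_total  : forall a b, lt a b \/ a = b \/ lt b a;
  o1_wf     : well_founded lt;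
  o1_uncountable : ~ countable_type I;
  o1_segments_countable : forall b, countable_type {a : I | lt a b}
}.

Record tight_gap (I : Type) (lt : I -> I -> Prop) (A B : I -> nset) : Prop := {
  tg_A_inf : forall a, infinite_nset (A a);
  tg_B_inf : forall a, infinite_nset (B a);
  tg_A_incr : forall a b, lt a b -> subset_star (A a) (A b);
  tg_B_decr : forall a b, lt a b -> subset_star (B b) (B a);
  tg_AB     : forall a b, lt a b -> subset_star (A b) (B a);
  tg_tight_below : forall E : nset,
      (forall a, subset_star E (B a)) -> exists b, subset_star E (A b);
  tg_tight_above : forall E : nset,
      (forall a, subset_star (A a) E) -> exists b, subset_star (B b) E
}.

Section Topo.
Variable T : Type.
Variable is_open : (T -> Prop) -> Prop.

Definition in_closure (S : T -> Prop) (x : T) : Prop :=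
  forall U, is_open U -> U x -> exists y, U y /\ S y.

Definition seq_converges (s : nat -> T) (x : T) : Prop :=
  forall U, is_open U -> U x -> exists N, forall n, N <= n -> U (s n).

Definition finite_set (S : T -> Prop) : Prop :=
  exists l : list T, forall t, S t -> In t l.

Definition frechet : Prop :=
  forall (S : T -> Prop) (x : T), in_closure S x ->
    exists s : nat -> T, (forall n, S (s n)) /\ seq_converges s x.

Definition alpha1 : Prop :=
  forall (x : T) (sig : nat -> nat -> T),
    (forall k, seq_converges (sig k) x) ->
    exists s : nat -> T, seq_converges s x /\
      forall k, finite_set (fun t => (exists n, sig k n = t) /\
                                     ~ (exists m, s m = t)).
End Topo.

(* ---------- the space X_G on omega \cup {infty} ----------
   Points: option nat, with None = infty.  Points of omega are isolated; the
   neighbourhood filter of infty is generated by the sets B_a \cup {infty}: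
   a set U is open iff, whenever infty \in U, U contains a finite intersection
   of sets B_a \cup {infty}. *)
Definition XG_open (I : Type) (B : I -> nset) (U : option nat -> Prop) : Prop :=
  U None -> exists l : list I,
    forall n, (forall a, In a l -> B a n) -> U (Some n).

Definition converges_to_infty (I : Type) (B : I -> nset) (E : nset) : Prop :=
  forall U, XG_open I B U -> U None -> subset_star E (fun n => U (Some n)).

(* Every countable subset of omega_1 is bounded.  Hence A_a is almost contained
   in every B_b, so every neighbourhood of infinity almost contains every A_a;
   together with tightness from below this gives (1).  A sequence converging to
   infinity has range almost contained in some A_a by (1), and countably many
   such a have a common upper bound c: listing A_c gives alpha_1.  For Frechet,
   if S meets some A_a in an infinite set, that set converges to infinity;
   otherwise tightness from above gives B_b almost disjoint from S, and then
   infinity in the closure of S forces a point of S lying in every B_a, which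
   belongs to every neighbourhood of infinity. *)

From Stdlib Require Import List Arith Lia Classical ClassicalEpsilon Cantor.
Import ListNotations.

Lemma subset_star_refl (X : nset) : subset_star X X.
Proof. now exists 0. Qed.

Lemma subset_star_trans (X Y Z : nset) :
  subset_star X Y -> subset_star Y Z -> subset_star X Z.
Proof.
  intros [N1 H1] [N2 H2]. exists (max N1 N2). intros n Hn Hx.
  apply H2; [lia|]. apply H1; [lia|exact Hx].
Qed.

Lemma subset_star_weaken (X Y Z : nset) :
  (forall n, Y n -> Z n) -> subset_star X Y -> subset_star X Z.
Proof. intros HYZ [N H]. exists N. auto. Qed.

Lemma finite_intersection_subset_star {J : Type} (X : nset) (Y : J -> nset)
    (l : list J) :
  (forall j, subset_star X (Y j)) ->
  subset_star X (fun n => forall j, In j l -> Y j n).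
Proof.
  intros HXY. induction l as [|j l [N1 H1]].
  - exists 0. intros n _ _ j [].
  - destruct (HXY j) as [N2 H2]. exists (max N1 N2).
    intros n Hn Hx j' [<-|Hj'].
    + apply H2; [lia|exact Hx].
    + apply H1; [lia|exact Hx|exact Hj'].
Qed.

Lemma not_infinite_subset_star (P Q : nset) :
  ~ infinite_nset (fun n => P n /\ Q n) -> subset_star Q (fun n => ~ P n).
Proof.
  intros Hfin. apply NNPP. intros Hss. apply Hfin. intros N.
  apply NNPP. intros Hnone. apply Hss. exists N. intros n Hn Hq Hp.
  apply Hnone. exists n. auto.
Qed.

Lemma initial_values_bounded (h : nat -> nat) (N : nat) :
  exists M, forall i, i < N -> h i < M.
Proof.
  induction N as [|N [M HM]].
  - exists 0. lia.
  - exists (S (max M (h N))). intros i Hi.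
    destruct (Nat.eq_dec i N) as [->|Hne]; [lia|].
    specialize (HM i ltac:(lia)). lia.
Qed.

Lemma finite_choice_list {J : Type} (P : nset) (Q : J -> nat -> Prop) (N : nat) :
  (forall n, P n -> exists j, Q j n) ->
  exists l, forall n, n < N -> P n -> exists j, In j l /\ Q j n.
Proof.
  intros HPQ. induction N as [|N [l Hl]].
  - exists []. lia.
  - destruct (classic (P N)) as [HN|HN].
    + destruct (HPQ N HN) as [j Hj]. exists (j :: l). intros n Hn Hp.
      destruct (Nat.eq_dec n N) as [->|Hne].
      * exists j. split; [left; reflexivity|exact Hj].
      * destruct (Hl n ltac:(lia) Hp) as [j' [Hin HQ]].
        exists j'. split; [right; exact Hin|exact HQ].
    + exists l. intros n Hn Hp.
      destruct (Nat.eq_dec n N) as [->|Hne]; [contradiction|].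
      apply Hl; [lia|exact Hp].
Qed.

Definition countable_on {T : Type} (P : T -> Prop) : Prop :=
  exists f : T -> nat, forall x y, P x -> P y -> f x = f y -> x = y.

Lemma countable_on_sig {T : Type} (P : T -> Prop) :
  countable_type {x : T | P x} -> countable_on P.
Proof.
  intros [g Hg].
  exists (fun x => match excluded_middle_informative (P x) with
                   | left Hx => g (exist _ x Hx)
                   | right _ => 0 end).
  intros x y Hx Hy.
  destruct (excluded_middle_informative (P x)) as [Hx'|]; [|contradiction].
  destruct (excluded_middle_informative (P y)) as [Hy'|]; [|contradiction].
  intros Hxy. exact (f_equal (@proj1_sig _ _) (Hg _ _ Hxy)).
Qed.

Lemma countable_on_add_point {T : Type} (P : T -> Prop) (z : T) :
  countable_on P -> countable_on (fun x => x = z \/ P x).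
Proof.
  intros [f Hf].
  exists (fun x => if excluded_middle_informative (x = z) then 0 else S (f x)).
  intros x y Hx Hy.
  destruct (excluded_middle_informative (x = z)) as [->|Hxz];
  destruct (excluded_middle_informative (y = z)) as [->|Hyz];
    intros Hxy; try discriminate; [reflexivity|].
  destruct Hx as [|Hx]; [contradiction|]. destruct Hy as [|Hy]; [contradiction|].
  injection Hxy. apply Hf; assumption.
Qed.

Lemma countable_of_countable_cover {T : Type} (C : nat -> T -> Prop) :
  (forall k, countable_on (C k)) -> (forall x, exists k, C k x) ->
  countable_type T.
Proof.
  intros HC Hcover.
  destruct (choice _ HC) as [f Hf].
  destruct (choice _ Hcover) as [k Hk].
  exists (fun x => to_nat (k x, f (k x) x)).
  intros x y Hxy. apply (f_equal of_nat) in Hxy. rewrite !cancel_of_to in Hxy.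
  injection Hxy as Hkxy Hfxy. rewrite <- Hkxy in Hfxy.
  apply (Hf (k x)); [apply Hk| rewrite Hkxy; apply Hk | exact Hfxy].
Qed.

Section Omega1.
Variables (I : Type) (lt : I -> I -> Prop).
Hypothesis Hw1 : omega1_order I lt.

(* Otherwise every point lies in a countable set {a | a = g k \/ lt a (g k)}. *)
Lemma omega1_countable_bounded (g : nat -> I) : exists c, forall k, lt (g k) c.
Proof.
  apply NNPP. intros Hunb. apply (o1_uncountable _ _ Hw1).
  apply (countable_of_countable_cover (fun k a => a = g k \/ lt a (g k))).
  - intros k. apply countable_on_add_point, countable_on_sig.
    exact (o1_segments_countable _ _ Hw1 (g k)).
  - intros c. apply NNPP. intros Hc. apply Hunb. exists c. intros k.
    destruct (o1_total _ _ Hw1 (g k) c) as [H|[H|H]];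
      [exact H| |]; exfalso; apply Hc; exists k; auto.
Qed.

Lemma omega1_upper_bound2 (a b : I) : exists c, lt a c /\ lt b c.
Proof.
  destruct (omega1_countable_bounded (fun k => match k with 0 => a | _ => b end)) as [c Hc].
  exists c. exact (conj (Hc 0) (Hc 1)).
Qed.

End Omega1.

Section TightGapSpace.
Variables (I : Type) (lt : I -> I -> Prop) (A B : I -> nset).
Hypothesis Hw1 : omega1_order I lt.
Hypothesis HG : tight_gap I lt A B.

Definition nbhd_infty (l : list I) (p : option nat) : Prop :=
  match p with
  | None => True
  | Some n => forall a, In a l -> B a n
  end.

Lemma nbhd_infty_open (l : list I) : XG_open I B (nbhd_infty l).
Proof. intros _. exists l. auto. Qed.

Lemma open_contains_nbhd_infty (U : option nat -> Prop) :
  XG_open I B U -> U None -> exists l, forall p, nbhd_infty l p -> U p.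
Proof.
  intros HU HN. destruct (HU HN) as [l Hl]. exists l. intros [n|] Hp; auto.
Qed.

Lemma singleton_open (m : nat) : XG_open I B (fun p => p = Some m).
Proof. discriminate. Qed.

Lemma A_subset_star_B (a b : I) : subset_star (A a) (B b).
Proof.
  destruct (omega1_upper_bound2 I lt Hw1 a b) as [c [Hac Hbc]].
  apply subset_star_trans with (A c).
  - exact (tg_A_incr _ _ _ _ HG a c Hac).
  - exact (tg_AB _ _ _ _ HG b c Hbc).
Qed.

Lemma converges_to_infty_iff (E : nset) :
  converges_to_infty I B E <-> exists a, subset_star E (A a).
Proof.
  split.
  - intros Hconv. apply (tg_tight_below _ _ _ _ HG). intros a.
    apply subset_star_weaken with (fun n => nbhd_infty [a] (Some n)).
    { intros n Hn. apply Hn. left. reflexivity. }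
    exact (Hconv _ (nbhd_infty_open [a]) Logic.I).
  - intros [a Ha] U HU HN. destruct (open_contains_nbhd_infty U HU HN) as [l Hl].
    apply subset_star_trans with (A a); [exact Ha|].
    apply subset_star_weaken with (fun n => nbhd_infty l (Some n)).
    { intros n. apply Hl. }
    apply finite_intersection_subset_star. apply A_subset_star_B.
Qed.

Lemma seq_converges_infty (E : nset) (s : nat -> option nat) :
  converges_to_infty I B E -> (forall k n, s k = Some n -> k <= n /\ E n) ->
  seq_converges (option nat) (XG_open I B) s None.
Proof.
  intros Hconv Hs U HU HN. destruct (Hconv U HU HN) as [N HE].
  exists N. intros k Hk. destruct (s k) as [n|] eqn:Hsk; [|exact HN].
  destruct (Hs k n Hsk) as [Hkn Hn]. apply HE; [lia|exact Hn].
Qed.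

Lemma range_converges_to_infty (s : nat -> option nat) :
  seq_converges (option nat) (XG_open I B) s None ->
  converges_to_infty I B (fun n => exists i, s i = Some n).
Proof.
  intros Hs U HU HN. destruct (Hs U HU HN) as [N HsU].
  destruct (initial_values_bounded
              (fun i => match s i with Some n => n | None => 0 end) N) as [M HM].
  exists M. intros n Hn [i Hi].
  destruct (le_lt_dec N i) as [HNi|HiN].
  - rewrite <- Hi. exact (HsU i HNi).
  - specialize (HM i HiN). rewrite Hi in HM. lia.
Qed.

Lemma seq_converges_const (x : option nat) :
  seq_converges (option nat) (XG_open I B) (fun _ => x) x.
Proof. intros U _ HU. now exists 0. Qed.

(* The space is not T1: a point of every B_a lies in every neighbourhood of infinity. *)
Lemma seq_converges_kernel_point (n : nat) :
  (forall a, B a n) -> seq_converges (option nat) (XG_open I B) (fun _ => Some n) None.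
Proof.
  intros Hn U HU HN. destruct (open_contains_nbhd_infty U HU HN) as [l Hl].
  exists 0. intros k _. apply Hl. intros a _. apply Hn.
Qed.

Lemma seq_converges_Some (s : nat -> option nat) (m : nat) :
  seq_converges (option nat) (XG_open I B) s (Some m) ->
  exists N, forall n, N <= n -> s n = Some m.
Proof. intros Hs. exact (Hs _ (singleton_open m) eq_refl). Qed.

Lemma closure_infty_kernel_point (S : option nat -> Prop) :
  in_closure (option nat) (XG_open I B) S None -> ~ S None ->
  (forall a, subset_star (A a) (fun n => ~ S (Some n))) ->
  exists n, S (Some n) /\ forall a, B a n.
Proof.
  intros Hcl HSN HA.
  destruct (tg_tight_above _ _ _ _ HG _ HA) as [b [N Hb]].
  apply NNPP. intros Hnone.
  assert (Hout : forall n, S (Some n) -> exists a, ~ B a n).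
  { intros n Hn. apply NNPP. intros Hall. apply Hnone. exists n.
    split; [exact Hn|]. intros a. apply NNPP. intros Ha. apply Hall. now exists a. }
  destruct (finite_choice_list _ _ N Hout) as [l Hl].
  destruct (Hcl _ (nbhd_infty_open (b :: l)) Logic.I) as [[n|] [Hn HSn]];
    [|contradiction].
  destruct (le_lt_dec N n) as [HNn|HnN].
  - apply (Hb n HNn); [apply Hn; left; reflexivity|exact HSn].
  - destruct (Hl n HnN HSn) as [a [Ha HBa]]. apply HBa, Hn. right. exact Ha.
Qed.

Lemma XG_frechet : frechet (option nat) (XG_open I B).
Proof.
  intros S [m|] Hcl.
  - destruct (Hcl _ (singleton_open m) eq_refl) as [y [-> Hm]].
    exists (fun _ => Some m). split; [auto|apply seq_converges_const].
  - destruct (classic (S None)) as [HSN|HSN].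
    { exists (fun _ => None). split; [auto|apply seq_converges_const]. }
    destruct (classic (exists a, infinite_nset (fun n => S (Some n) /\ A a n)))
      as [[a Ha]|Hfin].
    + destruct (choice _ Ha) as [f Hf].
      exists (fun k => Some (f k)). split; [intros k; apply (Hf k)|].
      apply seq_converges_infty with (A a).
      * apply converges_to_infty_iff. exists a. apply subset_star_refl.
      * intros k n [= <-]. destruct (Hf k) as [Hk [_ Ha']]. auto.
    + assert (HA : forall a, subset_star (A a) (fun n => ~ S (Some n))).
      { intros a. apply not_infinite_subset_star. intros Hinf. apply Hfin. eauto. }
      destruct (closure_infty_kernel_point S Hcl HSN HA) as [n [HSn Hn]].
      exists (fun _ => Some n). split; [auto|exact (seq_converges_kernel_point n Hn)].
Qed.

Lemma XG_alpha1 : alpha1 (option nat) (XG_open I B).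
Proof.
  intros [m|] sig Hsig.
  - exists (fun _ => Some m). split; [apply seq_converges_const|].
    intros k. destruct (seq_converges_Some _ _ (Hsig k)) as [N HN].
    exists (map (sig k) (seq 0 N)). intros t [[n <-] Hnot].
    destruct (le_lt_dec N n) as [HNn|HnN].
    + exfalso. apply Hnot. exists 0. symmetry. exact (HN n HNn).
    + apply in_map, in_seq. lia.
  - assert (Hrange : forall k, exists a,
               subset_star (fun n => exists i, sig k i = Some n) (A a)).
    { intros k. apply converges_to_infty_iff, range_converges_to_infty, Hsig. }
    destruct (choice _ Hrange) as [g Hg].
    destruct (omega1_countable_bounded I lt Hw1 g) as [c Hc].
    exists (fun n => if excluded_middle_informative (A c n) then Some n else None).
    split.
    + apply seq_converges_infty with (A c).
      * apply converges_to_infty_iff. exists c. apply subset_star_refl.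
      * intros k n. destruct (excluded_middle_informative (A c k)); [|discriminate].
        intros [= <-]. auto.
    + intros k.
      destruct (subset_star_trans _ _ _ (Hg k) (tg_A_incr _ _ _ _ HG _ _ (Hc k)))
        as [N HN].
      exists (None :: map Some (seq 0 N)). intros t [[i <-] Hnot].
      destruct (sig k i) as [n|] eqn:Hi; [|left; reflexivity].
      right. apply in_map, in_seq.
      destruct (le_lt_dec N n) as [HNn|HnN]; [|lia].
      exfalso. apply Hnot. exists n.
      destruct (excluded_middle_informative (A c n)) as [|HAn]; [reflexivity|].
      exfalso. apply HAn, HN; eauto.
Qed.

End TightGapSpace.

Theorem mainTheorem7 (I : Type) (lt : I -> I -> Prop) (A B : I -> nset)
    (Hw1 : omega1_order I lt) (HG : tight_gap I lt A B) :
  (forall E : nset, infinite_nset E ->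
     (converges_to_infty I B E <-> exists a : I, subset_star E (A a)))
  /\ frechet (option nat) (XG_open I B)
  /\ alpha1 (option nat) (XG_open I B).
Proof.
  split; [|split].
  - intros E _. exact (converges_to_infty_iff I lt A B Hw1 HG E).
  - exact (XG_frechet I lt A B Hw1 HG).
  - exact (XG_alpha1 I lt A B Hw1 HG).
Qed.
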